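(* Let $e_1=(1:0:0)$, $e_2=(0:1:0)$, $e_3=(0:0:1)$, $e_4=(1:1:1)$ and $\mathcal S_1=\{e_1\}$, $\mathcal S_2=\{e_1,e_2\}$, $\mathcal S_3=\{e_1,e_2,e_3\}$, $\mathcal S_4=\{e_1,e_2,e_3,e_4\}$. Then for $i=1,2,3,4$ one has $\operatorname{span}(F_{\mathcal S_i})=I_{\mathcal S_i}$.
   Context: $H_k\subseteq\mathbb R[x,y,z]$: real ternary forms of degree $k$; $P_{3,4}=\{f\in H_4: f\ge0\text{ on }\mathbb P^2(\mathbb R)\}$. For $s\in\mathbb P^2(\mathbb R)$: $F_s=\{f\in P_{3,4}: f(s)=0\}$ and $I_s=\{f\in H_4: \operatorname{ord}_s(f)\ge2\}$, where $\operatorname{ord}_s(f)$ is the order of vanishing of $f$ at $s$ (least degree of a nonzero homogeneous component of $f$ in affine coordinates centered at $s$). For a finite set $\mathcal S=\{s_1,\dots,s_n\}$ of distinct real points, $F_{\mathcal S}=\bigcap_iF_{s_i}$ and $I_{\mathcal S}=\bigcap_iI_{s_i}$. *)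

From Stdlib Require Import Reals List.
Import ListNotations.
Open Scope R_scope.

(* A real ternary quartic form is encoded by its coefficient table
   c : nat -> nat -> R, where c i j is the coefficient of x^i y^j z^(4-i-j)
   (only entries with i + j <= 4 are meaningful). *)
Definition coeffs := nat -> nat -> R.

(* membership in H_4: no junk coefficients outside the 15 monomials *)
Definition is_form4 (c : coeffs) : Prop :=
  forall i j : nat, (4 < i + j)%nat -> c i j = 0.

Definition eval4 (c : coeffs) (x y z : R) : R :=
  sum_f_R0 (fun i => sum_f_R0 (fun j =>
     c i j * x ^ i * y ^ j * z ^ (4 - i - j)) (4 - i)) 4.

Definition dx4 (c : coeffs) (x y z : R) : R :=
  sum_f_R0 (fun i => sum_f_R0 (fun j =>
     c i j * INR i * x ^ (i - 1) * y ^ j * z ^ (4 - i - j)) (4 - i)) 4.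
Definition dy4 (c : coeffs) (x y z : R) : R :=
  sum_f_R0 (fun i => sum_f_R0 (fun j =>
     c i j * x ^ i * INR j * y ^ (j - 1) * z ^ (4 - i - j)) (4 - i)) 4.
Definition dz4 (c : coeffs) (x y z : R) : R :=
  sum_f_R0 (fun i => sum_f_R0 (fun j =>
     c i j * x ^ i * y ^ j * INR (4 - i - j) * z ^ (4 - i - j - 1)) (4 - i)) 4.

Definition point := (R * R * R)%type.

(* P_{3,4}: nonnegative on P^2(R) (equivalently on R^3, by homogeneity) *)
Definition psd4 (c : coeffs) : Prop :=
  is_form4 c /\ forall x y z : R, 0 <= eval4 c x y z.

Definition vanishes_at (c : coeffs) (s : point) : Prop :=
  let '(a, b, d) := s in eval4 c a b d = 0.

Definition inF (s : point) (c : coeffs) : Prop := psd4 c /\ vanishes_at c s.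

(* I_s : ord_s(f) >= 2, i.e. f and all its first partials vanish at s *)
Definition inI (s : point) (c : coeffs) : Prop :=
  is_form4 c /\
  let '(a, b, d) := s in
  eval4 c a b d = 0 /\ dx4 c a b d = 0 /\ dy4 c a b d = 0 /\ dz4 c a b d = 0.

Definition inF_S (S : list point) (c : coeffs) : Prop :=
  forall s, In s S -> inF s c.
Definition inI_S (S : list point) (c : coeffs) : Prop :=
  is_form4 c /\ forall s, In s S -> inI s c.

Definition in_span (P : coeffs -> Prop) (c : coeffs) : Prop :=
  exists (n : nat) (l : nat -> R) (g : nat -> coeffs),
    (forall k, (k < n)%nat -> P (g k)) /\
    forall i j : nat, c i j = fold_right Rplus 0 (map (fun k => l k * g k i j) (seq 0 n)).

Definition e1 : point := (1, 0, 0).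
Definition e2 : point := (0, 1, 0).
Definition e3 : point := (0, 0, 1).
Definition e4 : point := (1, 1, 1).

Definition S_ (i : nat) : list point :=
  match i with
  | 1%nat => [e1]
  | 2%nat => [e1; e2]
  | 3%nat => [e1; e2; e3]
  | _ => [e1; e2; e3; e4]
  end.

From Stdlib Require Import Reals List Lra Lia FunctionalExtensionality.
From Coquelicot Require Import Coquelicot.
Import ListNotations.
Open Scope R_scope.

(* A nonnegative form attains its minimum at each of its real zeros, so its gradient vanishes
   there; as the four conditions of [I_S] are linear, span(F_S) is contained in I_S.
   Conversely, for these configurations every quartic singular along S is a combination of
   products [p q] of quadrics vanishing on S (products of quadratic monomials for S_1, S_2,
   S_3, and of [xy - xz] and [xy - yz] for S_4), and [p q = ((p + q)^2 - p^2 - q^2) / 2] is a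
   combination of squares of such quadrics, which lie in F_S. *)

Lemma eval4_has_derivative_x (c : coeffs) a b d :
  derivable_pt_lim (fun t => eval4 c (a + t) b d) 0 (dx4 c a b d).
Proof.
  apply is_derive_Reals; unfold eval4, dx4; simpl.
  auto_derive; [exact I|]. simpl; ring.
Qed.

Lemma eval4_has_derivative_y (c : coeffs) a b d :
  derivable_pt_lim (fun t => eval4 c a (b + t) d) 0 (dy4 c a b d).
Proof.
  apply is_derive_Reals; unfold eval4, dy4; simpl.
  auto_derive; [exact I|]. simpl; ring.
Qed.

Lemma eval4_has_derivative_z (c : coeffs) a b d :
  derivable_pt_lim (fun t => eval4 c a b (d + t)) 0 (dz4 c a b d).
Proof.
  apply is_derive_Reals; unfold eval4, dz4; simpl.
  auto_derive; [exact I|]. simpl; ring.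
Qed.

Lemma derivable_pt_lim_min_eq0 (f : R -> R) t L :
  derivable_pt_lim f t L -> (forall u, f t <= f u) -> L = 0.
Proof.
  intros Hf Hmin.
  assert (pr : derivable_pt f t) by (exists L; exact Hf).
  rewrite <- (derive_pt_eq_0 f t L pr Hf).
  apply (deriv_minimum f (t - 1) (t + 1) t pr); try lra.
  intros; apply Hmin.
Qed.

Lemma psd4_zero_gradient c a b d : psd4 c -> eval4 c a b d = 0 ->
  dx4 c a b d = 0 /\ dy4 c a b d = 0 /\ dz4 c a b d = 0.
Proof.
  intros [_ Hpos] Hzero; repeat split.
  - apply (derivable_pt_lim_min_eq0 _ _ _ (eval4_has_derivative_x c a b d)).
    intros u; rewrite Rplus_0_r, Hzero; apply Hpos.
  - apply (derivable_pt_lim_min_eq0 _ _ _ (eval4_has_derivative_y c a b d)).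
    intros u; rewrite Rplus_0_r, Hzero; apply Hpos.
  - apply (derivable_pt_lim_min_eq0 _ _ _ (eval4_has_derivative_z c a b d)).
    intros u; rewrite Rplus_0_r, Hzero; apply Hpos.
Qed.

Definition lin_comb (l : nat -> R) (g : nat -> coeffs) (ks : list nat) : coeffs :=
  fun i j => fold_right Rplus 0 (map (fun k => l k * g k i j) ks).

Definition linear_functional (L : coeffs -> R) : Prop :=
  L (fun _ _ => 0) = 0 /\
  forall a (u v : coeffs), L (fun i j => a * u i j + v i j) = a * L u + L v.

Lemma linear_functional_lin_comb_eq0 L l g ks : linear_functional L ->
  (forall k, In k ks -> L (g k) = 0) -> L (lin_comb l g ks) = 0.
Proof.
  intros [Hzero Hlin]; induction ks as [|k ks IH]; intros Hker; [exact Hzero|].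
  change (L (fun i j => l k * g k i j + lin_comb l g ks i j) = 0).
  rewrite Hlin, Hker, IH; [ring | |].
  - intros k' Hk'; apply Hker; right; exact Hk'.
  - left; reflexivity.
Qed.

Lemma in_span_kernel (P : coeffs -> Prop) L c : linear_functional L ->
  in_span P c -> (forall g, P g -> L g = 0) -> L c = 0.
Proof.
  intros HL [n [l [g [Hg Hc]]]] Hker.
  replace c with (lin_comb l g (seq 0 n))
    by (extensionality i; extensionality j; symmetry; apply Hc).
  apply linear_functional_lin_comb_eq0; [exact HL|].
  intros k Hk; apply in_seq in Hk; apply Hker, Hg; lia.
Qed.

Lemma linear_functional_coeff i j : linear_functional (fun c => c i j).
Proof. split; reflexivity. Qed.

Lemma linear_functional_eval4 a b d : linear_functional (fun c => eval4 c a b d).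
Proof. split; intros; unfold eval4; simpl; ring. Qed.

Lemma linear_functional_dx4 a b d : linear_functional (fun c => dx4 c a b d).
Proof. split; intros; unfold dx4; simpl; ring. Qed.

Lemma linear_functional_dy4 a b d : linear_functional (fun c => dy4 c a b d).
Proof. split; intros; unfold dy4; simpl; ring. Qed.

Lemma linear_functional_dz4 a b d : linear_functional (fun c => dz4 c a b d).
Proof. split; intros; unfold dz4; simpl; ring. Qed.

Lemma in_span_F_S_in_I_S (S : list point) c :
  S <> [] -> in_span (inF_S S) c -> inI_S S c.
Proof.
  intros HS Hspan.
  assert (Hform : is_form4 c).
  { destruct S as [|s0 S]; [contradiction|].
    intros i j Hij.
    apply (in_span_kernel _ (fun c => c i j) c (linear_functional_coeff i j) Hspan).
    intros g Hg. destruct (Hg s0 (in_eq _ _)) as [[Hgform _] _]. exact (Hgform i j Hij). }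
  split; [exact Hform|]. intros [[a b] d] Hs. split; [exact Hform|].
  assert (Hsing : forall g, inF_S S g -> eval4 g a b d = 0 /\
      dx4 g a b d = 0 /\ dy4 g a b d = 0 /\ dz4 g a b d = 0).
  { intros g Hg. destruct (Hg _ Hs) as [Hpsd Hvan].
    split; [exact Hvan|]. exact (psd4_zero_gradient g a b d Hpsd Hvan). }
  repeat split;
    [ apply (in_span_kernel _ _ c (linear_functional_eval4 a b d) Hspan)
    | apply (in_span_kernel _ _ c (linear_functional_dx4 a b d) Hspan)
    | apply (in_span_kernel _ _ c (linear_functional_dy4 a b d) Hspan)
    | apply (in_span_kernel _ _ c (linear_functional_dz4 a b d) Hspan) ];
    apply Hsing.
Qed.

Lemma fold_right_Rplus_init (a : R) (xs : list R) :
  fold_right Rplus a xs = fold_right Rplus 0 xs + a.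
Proof. induction xs as [|x xs IH]; simpl; [ring | rewrite IH; ring]. Qed.

Lemma map_seq_add {A} (f : nat -> A) s m n :
  map f (seq (s + m) n) = map (fun k => f (k + m)%nat) (seq s n).
Proof.
  revert s; induction n as [|n IH]; intros s; [reflexivity|].
  simpl; rewrite <- IH; reflexivity.
Qed.

Lemma in_span_ext (P : coeffs -> Prop) c d :
  (forall i j, c i j = d i j) -> in_span P d -> in_span P c.
Proof.
  intros Hcd [n [l [g [Hg Hd]]]]. exists n, l, g.
  split; [exact Hg|]. intros i j; rewrite Hcd; apply Hd.
Qed.

Lemma in_span_zero (P : coeffs -> Prop) : in_span P (fun _ _ => 0).
Proof. exists 0%nat, (fun _ => 0), (fun _ _ _ => 0). split; [lia | reflexivity]. Qed.

Lemma in_span_single (P : coeffs -> Prop) g : P g -> in_span P g.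
Proof.
  intros Hg. exists 1%nat, (fun _ => 1), (fun _ => g).
  split; [intros; exact Hg | intros; simpl; ring].
Qed.

Lemma fold_right_Rplus_map_scale (f : nat -> R) a ks :
  fold_right Rplus 0 (map (fun k => a * f k) ks) = a * fold_right Rplus 0 (map f ks).
Proof. induction ks as [|k ks IH]; simpl; [ring | rewrite IH; ring]. Qed.

Lemma in_span_scale (P : coeffs -> Prop) a c :
  in_span P c -> in_span P (fun i j => a * c i j).
Proof.
  intros [n [l [g [Hg Hc]]]]. exists n, (fun k => a * l k), g.
  split; [exact Hg|]. intros i j; rewrite Hc, <- fold_right_Rplus_map_scale.
  f_equal; apply map_ext; intros; ring.
Qed.

Lemma in_span_add (P : coeffs -> Prop) c d :
  in_span P c -> in_span P d -> in_span P (fun i j => c i j + d i j).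
Proof.
  intros [n [l [g [Hg Hc]]]] [m [l' [g' [Hg' Hd]]]].
  exists (n + m)%nat, (fun k => if (k <? n)%nat then l k else l' (k - n)%nat),
    (fun k => if (k <? n)%nat then g k else g' (k - n)%nat).
  split.
  - intros k Hk; destruct (Nat.ltb_spec k n); [apply Hg | apply Hg']; lia.
  - intros i j.
    rewrite seq_app, map_app, fold_right_app, fold_right_Rplus_init, Hc, Hd.
    rewrite (map_seq_add _ 0 n m).
    f_equal.
    + f_equal; apply map_ext_in; intros k Hk; apply in_seq in Hk.
      destruct (Nat.ltb_spec k n); [reflexivity | lia].
    + f_equal; apply map_ext; intros k.
      destruct (Nat.ltb_spec (k + n) n); [lia|].
      rewrite Nat.add_sub; reflexivity.
Qed.

(* [(a, b, c, d, e, f)] is the quadratic form [a x^2 + b y^2 + c z^2 + d xy + e xz + f yz]. *)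
Definition quad := (R * R * R * R * R * R)%type.

Definition qeval (q : quad) (s : point) : R :=
  let '(a, b, c, d, e, f) := q in
  let '(x, y, z) := s in
  a * x ^ 2 + b * y ^ 2 + c * z ^ 2 + d * x * y + e * x * z + f * y * z.

Definition qadd (p q : quad) : quad :=
  let '(a, b, c, d, e, f) := p in
  let '(a', b', c', d', e', f') := q in
  (a + a', b + b', c + c', d + d', e + e', f + f').

Definition qmul (p q : quad) : coeffs := fun i j =>
  let '(a, b, c, d, e, f) := p in
  let '(a', b', c', d', e', f') := q in
  match (i, j) with
  | (4, 0)%nat => a * a'
  | (0, 4)%nat => b * b'
  | (0, 0)%nat => c * c'
  | (3, 1)%nat => a * d' + d * a'
  | (3, 0)%nat => a * e' + e * a'
  | (1, 3)%nat => b * d' + d * b'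
  | (0, 3)%nat => b * f' + f * b'
  | (1, 0)%nat => c * e' + e * c'
  | (0, 1)%nat => c * f' + f * c'
  | (2, 2)%nat => a * b' + b * a' + d * d'
  | (2, 0)%nat => a * c' + c * a' + e * e'
  | (0, 2)%nat => b * c' + c * b' + f * f'
  | (2, 1)%nat => a * f' + f * a' + d * e' + e * d'
  | (1, 2)%nat => b * e' + e * b' + d * f' + f * d'
  | (1, 1)%nat => c * d' + d * c' + e * f' + f * e'
  | _ => 0
  end.

Definition vanishes_on (S : list point) (q : quad) : Prop :=
  forall s, In s S -> qeval q s = 0.

Lemma qeval_add p q s : qeval (qadd p q) s = qeval p s + qeval q s.
Proof.
  destruct p as [[[[[a b] c] d] e] f], q as [[[[[a' b'] c'] d'] e'] f'], s as [[x y] z].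
  simpl; ring.
Qed.

Lemma eval4_qmul p q x y z :
  eval4 (qmul p q) x y z = qeval p (x, y, z) * qeval q (x, y, z).
Proof.
  destruct p as [[[[[a b] c] d] e] f], q as [[[[[a' b'] c'] d'] e'] f'].
  unfold eval4; simpl; ring.
Qed.

Lemma is_form4_qmul p q : is_form4 (qmul p q).
Proof.
  destruct p as [[[[[a b] c] d] e] f], q as [[[[[a' b'] c'] d'] e'] f'].
  intros i j Hij.
  destruct i as [|[|[|[|[|i]]]]], j as [|[|[|[|[|j]]]]]; simpl in Hij; try lia; reflexivity.
Qed.

Lemma qmul_polarize p q i j :
  qmul p q i j = / 2 * qmul (qadd p q) (qadd p q) i j
               + (- / 2 * qmul p p i j + - / 2 * qmul q q i j).
Proof.
  destruct p as [[[[[a b] c] d] e] f], q as [[[[[a' b'] c'] d'] e'] f'].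
  destruct i as [|[|[|[|[|i]]]]], j as [|[|[|[|[|j]]]]]; simpl; field.
Qed.

Lemma inF_S_qmul_self S q : vanishes_on S q -> inF_S S (qmul q q).
Proof.
  intros Hq [[x y] z] Hs. split.
  - split; [apply is_form4_qmul|]. intros x' y' z'.
    rewrite eval4_qmul; apply Rle_0_sqr.
  - simpl; rewrite eval4_qmul, (Hq _ Hs); ring.
Qed.

Lemma in_span_qmul S p q : vanishes_on S p -> vanishes_on S q ->
  in_span (inF_S S) (qmul p q).
Proof.
  intros Hp Hq.
  apply (in_span_ext _ _ _ (qmul_polarize p q)).
  apply in_span_add; [|apply in_span_add];
    apply in_span_scale, in_span_single, inF_S_qmul_self; try assumption.
  intros s Hs; rewrite qeval_add, Hp, Hq by exact Hs; ring.
Qed.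

Definition qcomb (c : coeffs) (L : list (nat * nat * quad * quad)) : coeffs := fun i j =>
  fold_right (fun '(k, l, p, q) acc => c k l * qmul p q i j + acc) 0 L.

Lemma in_span_qcomb S c L :
  List.Forall (fun '(_, _, p, q) => vanishes_on S p /\ vanishes_on S q) L ->
  in_span (inF_S S) (qcomb c L).
Proof.
  induction 1 as [|[[[k l] p] q] L Hpq _ IH]; [apply in_span_zero|].
  destruct Hpq as [Hp Hq].
  apply (in_span_add _ (fun i j => c k l * qmul p q i j)); [|exact IH].
  apply in_span_scale, in_span_qmul; assumption.
Qed.

Definition quad_yy : quad := (0, 1, 0, 0, 0, 0).
Definition quad_zz : quad := (0, 0, 1, 0, 0, 0).
Definition quad_xy : quad := (0, 0, 0, 1, 0, 0).
Definition quad_xz : quad := (0, 0, 0, 0, 1, 0).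
Definition quad_yz : quad := (0, 0, 0, 0, 0, 1).
Definition quad_u : quad := (0, 0, 0, 1, -1, 0).
Definition quad_v : quad := (0, 0, 0, 1, 0, -1).

Ltac singular_at HI s :=
  let H := fresh "Hsing" in
  pose proof (HI s ltac:(simpl; tauto)) as [_ H];
  unfold s, eval4, dx4, dy4, dz4 in H; simpl in H.

Ltac coeffs_agree Hform :=
  intros i j;
  destruct i as [|[|[|[|[|i]]]]], j as [|[|[|[|[|j]]]]]; unfold qcomb; simpl;
  try (rewrite Hform by (simpl; lia); ring); lra.

Ltac factors_vanish :=
  repeat constructor; intros s Hs; simpl in Hs;
  repeat destruct Hs as [<- | Hs]; try contradiction; simpl; ring.

Lemma I_S1_in_span c : inI_S (S_ 1) c -> in_span (inF_S (S_ 1)) c.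
Proof.
  intros [Hform HI]. singular_at HI e1.
  apply (in_span_ext _ _ (qcomb c
    [(2, 2, quad_xy, quad_xy); (2, 1, quad_xy, quad_xz); (2, 0, quad_xz, quad_xz);
     (1, 3, quad_xy, quad_yy); (1, 2, quad_xy, quad_yz); (1, 1, quad_xz, quad_yz);
     (1, 0, quad_xz, quad_zz); (0, 4, quad_yy, quad_yy); (0, 3, quad_yy, quad_yz);
     (0, 2, quad_yy, quad_zz); (0, 1, quad_yz, quad_zz); (0, 0, quad_zz, quad_zz)]%nat)).
  - coeffs_agree Hform.
  - apply in_span_qcomb; factors_vanish.
Qed.

Lemma I_S2_in_span c : inI_S (S_ 2) c -> in_span (inF_S (S_ 2)) c.
Proof.
  intros [Hform HI]. singular_at HI e1. singular_at HI e2.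
  apply (in_span_ext _ _ (qcomb c
    [(2, 2, quad_xy, quad_xy); (2, 1, quad_xy, quad_xz); (2, 0, quad_xz, quad_xz);
     (1, 2, quad_xy, quad_yz); (1, 1, quad_xz, quad_yz); (1, 0, quad_xz, quad_zz);
     (0, 2, quad_yz, quad_yz); (0, 1, quad_yz, quad_zz); (0, 0, quad_zz, quad_zz)]%nat)).
  - coeffs_agree Hform.
  - apply in_span_qcomb; factors_vanish.
Qed.

Lemma I_S3_in_span c : inI_S (S_ 3) c -> in_span (inF_S (S_ 3)) c.
Proof.
  intros [Hform HI]. singular_at HI e1. singular_at HI e2. singular_at HI e3.
  apply (in_span_ext _ _ (qcomb c
    [(2, 2, quad_xy, quad_xy); (2, 1, quad_xy, quad_xz); (2, 0, quad_xz, quad_xz);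
     (1, 2, quad_xy, quad_yz); (1, 1, quad_xz, quad_yz); (0, 2, quad_yz, quad_yz)]%nat)).
  - coeffs_agree Hform.
  - apply in_span_qcomb; factors_vanish.
Qed.

(* [I_S4] is 3-dimensional, spanned by [u^2], [v^2], [u v], whose coefficients at
   [x^2 z^2], [y^2 z^2], [x y z^2] form the identity matrix. *)
Lemma I_S4_in_span c : inI_S (S_ 4) c -> in_span (inF_S (S_ 4)) c.
Proof.
  intros [Hform HI].
  singular_at HI e1. singular_at HI e2. singular_at HI e3. singular_at HI e4.
  apply (in_span_ext _ _ (qcomb c
    [(2, 0, quad_u, quad_u); (0, 2, quad_v, quad_v); (1, 1, quad_u, quad_v)]%nat)).
  - coeffs_agree Hform.
  - apply in_span_qcomb; factors_vanish.
Qed.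

Theorem mainTheorem9 : forall i : nat, (1 <= i <= 4)%nat ->
  forall c : coeffs, in_span (inF_S (S_ i)) c <-> inI_S (S_ i) c.
Proof.
  intros i Hi c; split.
  - apply in_span_F_S_in_I_S.
    destruct i as [|[|[|[|i]]]]; simpl; congruence.
  - destruct i as [|[|[|[|[|i]]]]]; try lia.
    + apply I_S1_in_span.
    + apply I_S2_in_span.
    + apply I_S3_in_span.
    + apply I_S4_in_span.
Qed.
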